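(* Let $\beta_{\mathtt{H}},\beta_{\mathtt{L}},\gamma_{\mathtt{H}},\gamma_{\mathtt{L}}>0$ with $\beta_{\mathtt{H}}/\gamma_{\mathtt{H}}>\beta_{\mathtt{L}}/\gamma_{\mathtt{L}}$ and $\beta_{\mathtt{H}}>\beta_{\mathtt{L}}$, $q_{\mathtt{HL}},q_{\mathtt{LH}}\ge 0$, $\alpha\in(0,1)$, $\rho_{\mathtt{H}},\rho_{\mathtt{L}}>0$, $\mathtt{C}_{\mathtt{P}}>0$. For $z_{\mathtt{S}}\in[0,1]$ let $\hat\beta_{\mathtt{Q}}(z_{\mathtt{S}}):=\beta_{\mathtt{Q}}(\alpha z_{\mathtt{S}}+1-z_{\mathtt{S}})$, $\mathtt{Q}\in\{\mathtt{H},\mathtt{L}\}$, and consider \begin{align*} \dot{\mathtt{I}}_{\mathtt{H}}&=\hat\beta_{\mathtt{H}}(z_{\mathtt{S}})\mathtt{I}_{\mathtt{H}}(1-\mathtt{I}_{\mathtt{H}}-\mathtt{I}_{\mathtt{L}})+q_{\mathtt{LH}}\mathtt{I}_{\mathtt{L}}-(q_{\mathtt{HL}}+\gamma_{\mathtt{H}})\mathtt{I}_{\mathtt{H}},\\ \dot{\mathtt{I}}_{\mathtt{L}}&=\hat\beta_{\mathtt{L}}(z_{\mathtt{S}})\mathtt{I}_{\mathtt{L}}(1-\mathtt{I}_{\mathtt{H}}-\mathtt{I}_{\mathtt{L}})+q_{\mathtt{HL}}\mathtt{I}_{\mathtt{H}}-(q_{\mathtt{LH}}+\gamma_{\mathtt{L}})\mathtt{I}_{\mathtt{L}}.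 \end{align*} Suppose $\max(q_{\mathtt{LH}}+\gamma_{\mathtt{L}},q_{\mathtt{HL}}+\gamma_{\mathtt{H}})\le\min(\hat\beta_{\mathtt{H}}(1),\hat\beta_{\mathtt{L}}(1))$. Let $(\mathtt{I}^\star_{\mathtt{H}}(z_{\mathtt{S}}),\mathtt{I}^\star_{\mathtt{L}}(z_{\mathtt{S}}))$ denote the endemic equilibrium (an equilibrium in $(0,1)^2$) at $z_{\mathtt{S}}$, and define \begin{align*} \mathtt{C}_{\min}&:=(1-\alpha)\big(\beta_{\mathtt{H}}\rho_{\mathtt{H}}\mathtt{I}^\star_{\mathtt{H}}(1)+\beta_{\mathtt{L}}\rho_{\mathtt{L}}\mathtt{I}^\star_{\mathtt{L}}(1)\big),\\ \mathtt{C}_{\max}&:=(1-\alpha)\big(\beta_{\mathtt{H}}\rho_{\mathtt{H}}\mathtt{I}^\star_{\mathtt{H}}(0)+\beta_{\mathtt{L}}\rho_{\mathtt{L}}\mathtt{I}^\star_{\mathtt{L}}(0)\big). \end{align*} Then the protection level $z^{\mathtt{NE}}_{\mathtt{S}}$ at stationary Nash equilibria satisfies: (a) if $\mathtt{C}_{\mathtt{P}}<\mathtt{C}_{\min}$ then $z^{\mathtt{NE}}_{\mathtt{S}}=1$; (b) if $\mathtt{C}_{\mathtt{P}}>\mathtt{C}_{\max}$ then $z^{\mathtt{NE}}_{\mathtt{S}}=0$; (c) if $\mathtt{C}_{\min}\le\mathtt{C}_{\mathtt{P}}\le\mathtt{C}_{\max}$, there exists a unique $z^{\mathtt{NE}}_{\mathtt{S}}\in[0,1]$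 such that $\Delta R(\mathtt{I}^\star_{\mathtt{H}}(z^{\mathtt{NE}}_{\mathtt{S}}),\mathtt{I}^\star_{\mathtt{L}}(z^{\mathtt{NE}}_{\mathtt{S}}))=0$. Moreover, the infected proportions at the stationary Nash equilibrium are at their respective unique endemic equilibria $\mathtt{I}^\star_{\mathtt{H}}(z^{\mathtt{NE}}_{\mathtt{S}}),\mathtt{I}^\star_{\mathtt{L}}(z^{\mathtt{NE}}_{\mathtt{S}})$.
   Context: Bi-virus SIS model with strains $\mathtt{H},\mathtt{L}$; $\mathtt{I}_{\mathtt{H}},\mathtt{I}_{\mathtt{L}}$ infected fractions, $\beta$'s transmission rates, $\gamma$'s recovery rates, $q$'s mutation rates, $z_{\mathtt{S}}$ the fraction of susceptibles adopting protection, which scales their infection rate by $\alpha$. Each susceptible chooses action $\mathtt{P}$ (protect) or $\mathtt{U}$ (unprotected) with instantaneous rewards $R[\mathtt{P}](\mathtt{I}_{\mathtt{H}},\mathtt{I}_{\mathtt{L}})=-\mathtt{C}_{\mathtt{P}}-\alpha(\rho_{\mathtt{H}}\beta_{\mathtt{H}}\mathtt{I}_{\mathtt{H}}+\rho_{\mathtt{L}}\beta_{\mathtt{L}}\mathtt{I}_{\mathtt{L}})$ and $R[\mathtt{U}](\mathtt{I}_{\mathtt{H}},\mathtt{I}_{\mathtt{L}})=-(\rho_{\mathtt{H}}\beta_{\mathtt{H}}\mathtt{I}_{\mathtt{H}}+\rho_{\mathtt{L}}\beta_{\mathtt{L}}\mathtt{I}_{\mathtt{L}})$, where $\mathtt{C}_{\mathtt{P}}$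 is the protection cost and $\rho_{\mathtt{H}},\rho_{\mathtt{L}}$ losses from infection; $\Delta R:=R[\mathtt{P}]-R[\mathtt{U}]=-\mathtt{C}_{\mathtt{P}}+(1-\alpha)(\rho_{\mathtt{H}}\beta_{\mathtt{H}}\mathtt{I}_{\mathtt{H}}+\rho_{\mathtt{L}}\beta_{\mathtt{L}}\mathtt{I}_{\mathtt{L}})$. A tuple $(\mathtt{I}^\star_{\mathtt{H}},\mathtt{I}^\star_{\mathtt{L}},z^{\mathtt{NE}}_{\mathtt{S}})$ is a stationary Nash equilibrium if $(\mathtt{I}^\star_{\mathtt{H}},\mathtt{I}^\star_{\mathtt{L}})$ is the stable equilibrium of the dynamics at $z_{\mathtt{S}}=z^{\mathtt{NE}}_{\mathtt{S}}$ and: $z^{\mathtt{NE}}_{\mathtt{S}}=0\Rightarrow\Delta R(\mathtt{I}^\star_{\mathtt{H}},\mathtt{I}^\star_{\mathtt{L}})\le 0$ and $\Delta R<0\Rightarrow z^{\mathtt{NE}}_{\mathtt{S}}=0$; $z^{\mathtt{NE}}_{\mathtt{S}}=1\Rightarrow\Delta R\ge 0$ and $\Delta R>0\Rightarrow z^{\mathtt{NE}}_{\mathtt{S}}=1$; $z^{\mathtt{NE}}_{\mathtt{S}}\in(0,1)\Rightarrow\Delta R=0$. *)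

From Stdlib Require Import Reals Lra.
From Coquelicot Require Import Coquelicot.
Open Scope R_scope.

Definition beta_hat (al b z : R) : R := b * (al * z + 1 - z).

Definition fH (bH bL gH gL qHL qLH al z IH IL : R) : R :=
  beta_hat al bH z * IH * (1 - IH - IL) + qLH * IL - (qHL + gH) * IH.
Definition fL (bH bL gH gL qHL qLH al z IH IL : R) : R :=
  beta_hat al bL z * IL * (1 - IH - IL) + qHL * IH - (qLH + gL) * IL.

Definition feasible (IH IL : R) : Prop := 0 <= IH /\ 0 <= IL /\ IH + IL <= 1.

Definition is_equilibrium (bH bL gH gL qHL qLH al z IH IL : R) : Prop :=
  fH bH bL gH gL qHL qLH al z IH IL = 0 /\ fL bH bL gH gL qHL qLH al z IH IL = 0.

Definition is_endemic_eq (bH bL gH gL qHL qLH al z IH IL : R) : Prop :=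
  is_equilibrium bH bL gH gL qHL qLH al z IH IL /\
  0 < IH < 1 /\ 0 < IL < 1.

Definition is_solution (bH bL gH gL qHL qLH al z : R) (x y : R -> R) : Prop :=
  forall t, 0 <= t ->
    is_derive x t (fH bH bL gH gL qHL qLH al z (x t) (y t)) /\
    is_derive y t (fL bH bL gH gL qHL qLH al z (x t) (y t)).

Definition dist2 (a b c d : R) : R := sqrt ((a - c)^2 + (b - d)^2).

Definition is_stable_eq (bH bL gH gL qHL qLH al z eH eL : R) : Prop :=
  feasible eH eL /\
  is_equilibrium bH bL gH gL qHL qLH al z eH eL /\
  (forall eps, 0 < eps -> exists del, 0 < del /\
     forall x y, is_solution bH bL gH gL qHL qLH al z x y ->
       feasible (x 0) (y 0) -> dist2 (x 0) (y 0) eH eL < del ->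
       forall t, 0 <= t -> dist2 (x t) (y t) eH eL < eps) /\
  (exists eta, 0 < eta /\
     forall x y, is_solution bH bL gH gL qHL qLH al z x y ->
       feasible (x 0) (y 0) -> dist2 (x 0) (y 0) eH eL < eta ->
       is_lim x p_infty eH /\ is_lim y p_infty eL).

(* Difference of instantaneous rewards  Delta R = R[P] - R[U]. *)
Definition DeltaR (bH bL al rhoH rhoL CP IH IL : R) : R :=
  - CP + (1 - al) * (rhoH * bH * IH + rhoL * bL * IL).

Definition is_stationary_NE (bH bL gH gL qHL qLH al rhoH rhoL CP IH IL z : R)
  : Prop :=
  0 <= z <= 1 /\
  is_stable_eq bH bL gH gL qHL qLH al z IH IL /\
  (z = 0 -> DeltaR bH bL al rhoH rhoL CP IH IL <= 0) /\
  (DeltaR bH bL al rhoH rhoL CP IH IL < 0 -> z = 0) /\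
  (z = 1 -> DeltaR bH bL al rhoH rhoL CP IH IL >= 0) /\
  (DeltaR bH bL al rhoH rhoL CP IH IL > 0 -> z = 1) /\
  (0 < z < 1 -> DeltaR bH bL al rhoH rhoL CP IH IL = 0).

From Stdlib Require Import Reals Lra Psatz Factorial.
From Coquelicot Require Import Coquelicot.
Open Scope R_scope.

(* At an endemic equilibrium the balance equations say that the effective
   susceptible mass [w = (al z + 1 - z) (1 - IH - IL)] is the unique admissible
   root of [(qHL + gH - bH w) (qLH + gL - bL w) = qLH qHL], and that
   [qHL IH = (qLH + gL - bL w) IL]; here [qHL > 0] is forced by
   [bH / gH > bL / gL].  Hence [w] and the ratio [IH : IL] do not
   depend on [z]: the total infected fraction is [1 - w / (al z + 1 - z)], and
   the reward gap [Delta R] along the endemic branch is an explicit, strictly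
   decreasing function of [z], from which (a), (b), (c) follow.  The stability
   requirement rules out the equilibria with [IH = 0]: there strain [H] has a
   positive growth rate, so a solution started with a little [H] moves away.
   Such solutions exist by Picard iteration for the field clamped to the unit
   square, and they stay feasible, where the clamping is inactive. *)

Lemma derivable_pt_lim_continuity_pt f x l :
  derivable_pt_lim f x l -> continuity_pt f x.
Proof. intro Hd. apply derivable_continuous_pt. exact (exist _ l Hd). Qed.

Lemma le_of_derive_nonneg (f df : R -> R) (a b : R) : a <= b ->
  (forall x, a <= x <= b -> derivable_pt_lim f x (df x)) ->
  (forall x, a < x < b -> 0 <= df x) -> f a <= f b.
Proof.
  intros Hab Hd Hpos.
  destruct (Req_dec a b) as [-> | Hne]; [lra |].
  destruct (MVT_cor2 f df a b) as [c [Hfc Hc]]; [lra | exact Hd |].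
  specialize (Hpos c Hc). nra.
Qed.

Lemma continuity_pt_eps f x : continuity_pt f x <->
  forall eps, 0 < eps -> exists del, 0 < del /\
    forall y, Rabs (y - x) < del -> Rabs (f y - f x) < eps.
Proof.
  split; intros Hc eps Heps; destruct (Hc eps Heps) as [del [Hdel Hy]];
    exists del; (split; [lra |]).
  - intros y Hyx. destruct (Req_dec y x) as [-> | Hne].
    + rewrite Rminus_eq_0, Rabs_R0. exact Heps.
    + apply Hy. split; [split; [exact I | auto] | exact Hyx].
  - intros y [_ Hyx]. exact (Hy y Hyx).
Qed.

Lemma continuity_pt_Rmax0 s : continuity_pt (Rmax 0) s.
Proof.
  apply continuity_pt_eps. intros eps Heps. exists eps. split; [exact Heps |].
  intros y Hy. eapply Rle_lt_trans; [| exact Hy].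
  unfold Rmax; destruct (Rle_dec 0 y), (Rle_dec 0 s); unfold Rabs;
    repeat destruct Rcase_abs; lra.
Qed.

Lemma Rabs_Rmax0_le s : Rabs (Rmax 0 s) <= Rabs s.
Proof.
  unfold Rmax; destruct Rle_dec; unfold Rabs; repeat destruct Rcase_abs; lra.
Qed.

Lemma nonpos_preserved (f df : R -> R) :
  (forall t, 0 <= t -> derivable_pt_lim f t (df t)) ->
  f 0 <= 0 -> (forall t, 0 <= t -> 0 < f t -> df t <= 0) ->
  forall t, 0 <= t -> f t <= 0.
Proof.
  intros Hd Hf0 Hdec t1 Ht1.
  destruct (Rle_dec (f t1) 0) as [| Hpos%Rnot_le_lt]; [assumption | exfalso].
  set (E := fun s => 0 <= s <= t1 /\ f s <= 0).
  destruct (completeness E) as [t0 [Hub Hlub]].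
  { exists t1. intros s [Hs _]. lra. }
  { exists 0. split; [lra | exact Hf0]. }
  assert (Ht0 : 0 <= t0 <= t1).
  { split; [apply Hub; split; [lra | exact Hf0] |].
    apply Hlub. intros s [Hs _]. lra. }
  (* [t0] is the last time in [0, t1] at which [f <= 0]; it is attained by continuity *)
  assert (Hft0 : f t0 <= 0).
  { destruct (Rle_dec (f t0) 0) as [| Hn%Rnot_le_lt]; [assumption | exfalso].
    assert (Hc := derivable_pt_lim_continuity_pt _ _ _ (Hd t0 (proj1 Ht0))).
    destruct (proj1 (continuity_pt_eps f t0) Hc (f t0) Hn) as [del [Hdel Hnear]].
    assert (Hub' : is_upper_bound E (t0 - del / 2)).
    { intros s [Hs Hfs].
      destruct (Rle_dec s (t0 - del / 2)) as [| Hgt%Rnot_le_lt]; [assumption | exfalso].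
      assert (s <= t0) by (apply Hub; split; assumption).
      assert (Hfs' := Hnear s ltac:(apply Rabs_def1; lra)).
      apply Rabs_def2 in Hfs'. lra. }
    specialize (Hlub _ Hub'). lra. }
  assert (Hlt : t0 < t1) by (destruct (Req_dec t0 t1) as [-> |]; lra).
  assert (Hdecr : - f t0 <= - f t1).
  { apply (le_of_derive_nonneg (fun s => - f s) (fun s => - df s)); [lra | |].
    - intros s Hs. apply (derivable_pt_lim_opp f). apply Hd. lra.
    - intros s Hs. enough (Hfs : 0 < f s) by (specialize (Hdec s ltac:(lra) Hfs); lra).
      destruct (Rlt_dec 0 (f s)) as [| Hn%Rnot_lt_le]; [assumption | exfalso].
      assert (s <= t0) by (apply Hub; split; [lra | assumption]). lra. }
  lra.
Qed.

Lemma not_is_lim_0_of_nondecreasing (x : R -> R) T :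
  0 < x T -> (forall t, T <= t -> x T <= x t) -> ~ is_lim x p_infty 0.
Proof.
  intros HxT Hmono Hlim. apply is_lim_spec in Hlim.
  destruct (Hlim (mkposreal (x T) HxT)) as [T' HT']. simpl in HT'.
  set (t := Rmax T' T + 1).
  assert (Ht : T' < t /\ T <= t).
  { pose proof (Rmax_l T' T). pose proof (Rmax_r T' T). unfold t. lra. }
  specialize (HT' t (proj1 Ht)). specialize (Hmono t (proj2 Ht)).
  rewrite Rminus_0_r, Rabs_right in HT' by lra. lra.
Qed.

Definition lipschitz2 (L : R) (G : R -> R -> R) : Prop :=
  forall a b a' b', Rabs (G a b - G a' b') <= L * (Rabs (a - a') + Rabs (b - b')).

Lemma lipschitz2_continuity_pt L G f g s : 0 <= L -> lipschitz2 L G ->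
  continuity_pt f s -> continuity_pt g s ->
  continuity_pt (fun t => G (f t) (g t)) s.
Proof.
  intros HL HG Hf Hg. apply continuity_pt_eps. intros eps Heps.
  set (e := eps / (2 * L + 2)).
  assert (He : 0 < e) by (apply Rdiv_lt_0_compat; lra).
  assert (Hee : 2 * e * (L + 1) = eps) by (unfold e; field; lra).
  destruct (proj1 (continuity_pt_eps f s) Hf e He) as [d1 [Hd1 H1]].
  destruct (proj1 (continuity_pt_eps g s) Hg e He) as [d2 [Hd2 H2]].
  exists (Rmin d1 d2). split; [apply Rmin_pos; assumption |].
  intros y Hy. eapply Rle_lt_trans; [apply HG |].
  specialize (H1 y (Rlt_le_trans _ _ _ Hy (Rmin_l _ _))).
  specialize (H2 y (Rlt_le_trans _ _ _ Hy (Rmin_r _ _))).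
  nra.
Qed.

Lemma derivable_pt_lim_RInt c h t : (forall s, continuity_pt h s) ->
  derivable_pt_lim (fun t => c + RInt h 0 t) t (h t).
Proof.
  intro Hc. apply is_derive_Reals.
  assert (Hint : is_derive (RInt h 0) t (h t)).
  { apply is_derive_RInt with 0.
    - apply filter_forall. intro b. apply RInt_correct, ex_RInt_continuous.
      intros s _. apply continuity_pt_filterlim, Hc.
    - apply continuity_pt_filterlim, Hc. }
  replace (h t) with (plus zero (h t)) by apply plus_zero_l.
  exact (is_derive_plus (fun _ => c) (RInt h 0) t zero (h t) (is_derive_const c t) Hint).
Qed.

Lemma Rabs_le_of_derive_Rabs_le (D dD phi dphi : R -> R) t : 0 <= t ->
  D 0 = 0 -> phi 0 = 0 ->
  (forall s, 0 <= s <= t -> derivable_pt_lim D s (dD s)) ->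
  (forall s, 0 <= s <= t -> derivable_pt_lim phi s (dphi s)) ->
  (forall s, 0 < s < t -> Rabs (dD s) <= dphi s) -> Rabs (D t) <= phi t.
Proof.
  intros Ht HD0 Hphi0 HdD Hdphi Hb.
  assert (Hup : phi 0 - D 0 <= phi t - D t).
  { apply (le_of_derive_nonneg (fun s => phi s - D s) (fun s => dphi s - dD s)); [lra | |].
    - intros s Hs. apply (derivable_pt_lim_minus phi D); auto.
    - intros s Hs. specialize (Hb s Hs). apply Rabs_le_between in Hb. lra. }
  assert (Hlow : phi 0 + D 0 <= phi t + D t).
  { apply (le_of_derive_nonneg (fun s => phi s + D s) (fun s => dphi s + dD s)); [lra | |].
    - intros s Hs. apply (derivable_pt_lim_plus phi D); auto.
    - intros s Hs. specialize (Hb s Hs). apply Rabs_le_between in Hb. lra. }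
  apply Rabs_le. lra.
Qed.

Lemma Rabs_le_pow_of_derive (D dD : R -> R) (K : R) (k : nat) t :
  D 0 = 0 -> (forall s, derivable_pt_lim D s (dD s)) ->
  (forall s, Rabs (dD s) <= K * Rabs s ^ k) ->
  Rabs (D t) <= K / INR (S k) * Rabs t ^ S k.
Proof.
  assert (Hk : INR (S k) <> 0) by (apply not_0_INR; discriminate).
  assert (Hforward : forall (E dE : R -> R) u, 0 <= u -> E 0 = 0 ->
      (forall s, derivable_pt_lim E s (dE s)) ->
      (forall s, Rabs (dE s) <= K * Rabs s ^ k) ->
      Rabs (E u) <= K / INR (S k) * u ^ S k).
  { intros E dE u Hu HE0 HdE HbE.
    apply (Rabs_le_of_derive_Rabs_le E dE (fun s => K / INR (S k) * s ^ S k)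
      (fun s => K * s ^ k) u Hu HE0).
    - simpl. ring.
    - intros s _. apply HdE.
    - intros s _.
      replace (K * s ^ k) with (K / INR (S k) * (INR (S k) * s ^ Nat.pred (S k)))
        by (simpl; field; exact Hk).
      apply derivable_pt_lim_scal with (f := fun s => s ^ S k), derivable_pt_lim_pow.
    - intros s [Hs _]. rewrite <- (Rabs_right s) at 2 by lra. apply HbE. }
  intros HD0 HdD HbD.
  destruct (Rle_or_lt 0 t) as [Ht | Ht].
  - rewrite (Rabs_right t) by lra. exact (Hforward D dD t Ht HD0 HdD HbD).
  - rewrite (Rabs_left t), <- (Ropp_involutive t) at 1 by lra.
    apply (Hforward (fun s => D (- s)) (fun s => - dD (- s))); [lra | | |].
    + rewrite Ropp_0. exact HD0.
    + intro s. replace (- dD (- s)) with (dD (- s) * -1) by ring.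
      apply (derivable_pt_lim_comp Ropp D); [| apply HdD].
      apply (derivable_pt_lim_opp id), derivable_pt_lim_id.
    + intro s. rewrite Rabs_Ropp, <- (Rabs_Ropp s). apply HbD.
Qed.

Section Picard.

Variables (G1 G2 : R -> R -> R) (L M x0 y0 : R).
Hypotheses (HL : 0 < L) (HM : 0 <= M)
  (HG1 : lipschitz2 L G1) (HG2 : lipschitz2 L G2)
  (HB1 : forall a b, Rabs (G1 a b) <= M) (HB2 : forall a b, Rabs (G2 a b) <= M).

(* The field is evaluated at [Rmax 0 s]: freezing the state at negative times
   makes every iterate differentiable on all of [R], while only [t >= 0]
   matters. *)
Fixpoint picard (n : nat) : (R -> R) * (R -> R) :=
  match n with
  | O => (fun _ => x0, fun _ => y0)
  | S n =>
      let field G s := G (fst (picard n) (Rmax 0 s)) (snd (picard n) (Rmax 0 s)) in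
      (fun t => x0 + RInt (field G1) 0 t, fun t => y0 + RInt (field G2) 0 t)
  end.

Definition px n := fst (picard n).
Definition py n := snd (picard n).
Definition picard_field n (G : R -> R -> R) s := G (px n (Rmax 0 s)) (py n (Rmax 0 s)).

Lemma px_S n : px (S n) = fun t => x0 + RInt (picard_field n G1) 0 t.
Proof. reflexivity. Qed.

Lemma py_S n : py (S n) = fun t => y0 + RInt (picard_field n G2) 0 t.
Proof. reflexivity. Qed.

Lemma px_0 n : px n 0 = x0.
Proof. destruct n; [reflexivity |]. rewrite px_S, RInt_point. apply Rplus_0_r. Qed.

Lemma py_0 n : py n 0 = y0.
Proof. destruct n; [reflexivity |]. rewrite py_S, RInt_point. apply Rplus_0_r. Qed.

Lemma picard_field_continuity n G : lipschitz2 L G ->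
  (forall s, continuity_pt (px n) s) -> (forall s, continuity_pt (py n) s) ->
  forall s, continuity_pt (picard_field n G) s.
Proof.
  intros HG Hx Hy s.
  apply (lipschitz2_continuity_pt L); [lra | exact HG | |];
    apply continuity_pt_comp; auto using continuity_pt_Rmax0.
Qed.

Lemma picard_continuity n :
  (forall s, continuity_pt (px n) s) /\ (forall s, continuity_pt (py n) s).
Proof.
  induction n as [| n [IHx IHy]].
  - split; intro s; apply continuity_pt_const; intros a b; reflexivity.
  - split; intro s; [rewrite px_S | rewrite py_S];
      eapply derivable_pt_lim_continuity_pt, derivable_pt_lim_RInt;
      apply picard_field_continuity; assumption.
Qed.

Lemma px_derive n t : derivable_pt_lim (px (S n)) t (picard_field n G1 t).
Proof.
  rewrite px_S. apply derivable_pt_lim_RInt, picard_field_continuity;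
    [exact HG1 | apply picard_continuity ..].
Qed.

Lemma py_derive n t : derivable_pt_lim (py (S n)) t (picard_field n G2 t).
Proof.
  rewrite py_S. apply derivable_pt_lim_RInt, picard_field_continuity;
    [exact HG2 | apply picard_continuity ..].
Qed.

Definition picard_gap n t := Rabs (px (S n) t - px n t) + Rabs (py (S n) t - py n t).

Lemma picard_gap0_le t : picard_gap 0 t <= 2 * M * Rabs t.
Proof.
  assert (Hx : Rabs (px 1 t - px 1 0) <= M * Rabs (t - 0)).
  { apply (bounded_variation _ (picard_field 0 G1)). intros s _.
    split; [apply is_derive_Reals, px_derive | apply HB1]. }
  assert (Hy : Rabs (py 1 t - py 1 0) <= M * Rabs (t - 0)).
  { apply (bounded_variation _ (picard_field 0 G2)). intros s _.
    split; [apply is_derive_Reals, py_derive | apply HB2]. }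
  rewrite px_0, py_0, Rminus_0_r in *. unfold picard_gap.
  change (px 0 t) with x0. change (py 0 t) with y0. lra.
Qed.

Lemma picard_diff_le G (D : R -> R) n :
  lipschitz2 L G -> D 0 = 0 ->
  (forall s, derivable_pt_lim D s (picard_field (S n) G s - picard_field n G s)) ->
  (forall s, picard_gap n s <= M / L * (2 * L * Rabs s) ^ S n / INR (fact (S n))) ->
  forall t, Rabs (D t) <= M * (2 * L) ^ S n / INR (fact (S (S n))) * Rabs t ^ S (S n).
Proof.
  intros HG HD0 HdD Hgap t.
  assert (Hfact : INR (fact (S (S n))) = INR (S (S n)) * INR (fact (S n)))
    by (rewrite <- mult_INR; reflexivity).
  assert (Hf1 : 0 < INR (fact (S n))) by apply INR_fact_lt_0.
  assert (HSS : 0 < INR (S (S n))) by (apply lt_0_INR; lia).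
  replace (M * (2 * L) ^ S n / INR (fact (S (S n))))
    with ((M * (2 * L) ^ S n / INR (fact (S n))) / INR (S (S n)))
    by (rewrite Hfact; field; lra).
  apply (Rabs_le_pow_of_derive D _ _ _ t HD0 HdD).
  intro s. unfold picard_field. eapply Rle_trans; [apply HG |].
  fold (picard_gap n (Rmax 0 s)).
  apply Rle_trans with (L * (M / L * (2 * L * Rabs (Rmax 0 s)) ^ S n / INR (fact (S n)))).
  { apply Rmult_le_compat_l; [lra | apply Hgap]. }
  assert (Hpow : Rabs (Rmax 0 s) ^ S n <= Rabs s ^ S n)
    by (apply pow_incr; split; [apply Rabs_pos | apply Rabs_Rmax0_le]).
  rewrite Rpow_mult_distr.
  replace (L * (M / L * ((2 * L) ^ S n * Rabs (Rmax 0 s) ^ S n) / INR (fact (S n))))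
    with (M * (2 * L) ^ S n / INR (fact (S n)) * Rabs (Rmax 0 s) ^ S n) by (field; lra).
  apply Rmult_le_compat_l; [| exact Hpow].
  apply Rmult_le_pos; [apply Rmult_le_pos; [lra | apply pow_le; lra] |].
  left. apply Rinv_0_lt_compat, Hf1.
Qed.

Lemma picard_gap_le n t :
  picard_gap n t <= M / L * (2 * L * Rabs t) ^ S n / INR (fact (S n)).
Proof.
  revert t. induction n as [| n IH]; intro t.
  - replace (M / L * (2 * L * Rabs t) ^ 1 / INR (fact 1)) with (2 * M * Rabs t)
      by (simpl; field; lra).
    apply picard_gap0_le.
  - assert (Hx := picard_diff_le G1 (fun s => px (S (S n)) s - px (S n) s) n HG1
      ltac:(cbv beta; rewrite !px_0; ring)
      (fun s => derivable_pt_lim_minus _ _ _ _ _ (px_derive (S n) s) (px_derive n s)) IH t).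
    assert (Hy := picard_diff_le G2 (fun s => py (S (S n)) s - py (S n) s) n HG2
      ltac:(cbv beta; rewrite !py_0; ring)
      (fun s => derivable_pt_lim_minus _ _ _ _ _ (py_derive (S n) s) (py_derive n s)) IH t).
    unfold picard_gap. cbv beta in Hx, Hy.
    replace (M / L * (2 * L * Rabs t) ^ S (S n) / INR (fact (S (S n))))
      with (2 * (M * (2 * L) ^ S n / INR (fact (S (S n))) * Rabs t ^ S (S n))).
    + lra.
    + rewrite (Rpow_mult_distr (2 * L) (Rabs t)).
      change ((2 * L) ^ S (S n)) with (2 * L * (2 * L) ^ S n). field.
      split; [lra | apply INR_fact_neq_0].
Qed.

Definition exp_term (T : R) (k : nat) : R := / INR (fact k) * (2 * L * T) ^ k.

Lemma picard_dist_le T n j t : Rabs t <= T ->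
  Rabs (px (n + j) t - px n t) + Rabs (py (n + j) t - py n t)
  <= M / L * (sum_f_R0 (exp_term T) (n + j) - sum_f_R0 (exp_term T) n).
Proof.
  intro Ht. induction j as [| j IH].
  - rewrite Nat.add_0_r, !Rminus_eq_0, Rabs_R0. lra.
  - rewrite Nat.add_succ_r, tech5.
    assert (Hterm : picard_gap (n + j) t <= M / L * exp_term T (S (n + j))).
    { eapply Rle_trans; [apply picard_gap_le |]. unfold exp_term.
      assert (Hpow : (2 * L * Rabs t) ^ S (n + j) <= (2 * L * T) ^ S (n + j)).
      { apply pow_incr. pose proof (Rabs_pos t). split; nra. }
      assert (Hc : 0 <= M / L / INR (fact (S (n + j)))).
      { apply Rmult_le_pos; [apply Rmult_le_pos |]; try lra;
          left; apply Rinv_0_lt_compat; [lra | apply INR_fact_lt_0]. }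
      unfold Rdiv in *. nra. }
    unfold picard_gap in Hterm.
    assert (Tx := Rabs_triang (px (S (n + j)) t - px (n + j) t) (px (n + j) t - px n t)).
    assert (Ty := Rabs_triang (py (S (n + j)) t - py (n + j) t) (py (n + j) t - py n t)).
    replace (px (S (n + j)) t - px (n + j) t + (px (n + j) t - px n t))
      with (px (S (n + j)) t - px n t) in Tx by ring.
    replace (py (S (n + j)) t - py (n + j) t + (py (n + j) t - py n t))
      with (py (S (n + j)) t - py n t) in Ty by ring.
    lra.
Qed.

Lemma picard_uniform_cauchy T eps : 0 < eps -> exists N, forall n m t,
  (N <= n)%nat -> (N <= m)%nat -> Rabs t <= T ->
  Rabs (px m t - px n t) + Rabs (py m t - py n t) < eps.
Proof.
  intro Heps.
  assert (HML : 0 <= M / L) by (apply Rmult_le_pos; [lra | left; apply Rinv_0_lt_compat, HL]).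
  set (e := eps / (M / L + 1)).
  assert (He : 0 < e) by (apply Rdiv_lt_0_compat; lra).
  assert (Hee : M / L * e < eps).
  { assert (e * (M / L + 1) = eps) by (unfold e; field; lra). nra. }
  assert (Hexp : Cauchy_crit (sum_f_R0 (exp_term T))).
  { apply CV_Cauchy. destruct (exist_exp (2 * L * T)) as [l Hl]. exists l. exact Hl. }
  destruct (Hexp e He) as [N HN]. exists N.
  assert (Hle : forall n m t, (N <= n)%nat -> (n <= m)%nat -> Rabs t <= T ->
      Rabs (px m t - px n t) + Rabs (py m t - py n t) < eps).
  { intros n m t Hn Hnm Ht. replace m with (n + (m - n))%nat by lia.
    eapply Rle_lt_trans; [apply picard_dist_le, Ht |].
    specialize (HN (n + (m - n))%nat n ltac:(lia) Hn). unfold R_dist in HN.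
    apply Rle_lt_trans with (M / L * e); [| exact Hee].
    apply Rmult_le_compat_l; [exact HML |]. apply Rlt_le, Rle_lt_trans with (2 := HN), Rle_abs. }
  intros n m t Hn Hm Ht. destruct (Nat.le_ge_cases n m) as [Hnm | Hmn].
  - exact (Hle n m t Hn Hnm Ht).
  - rewrite (Rabs_minus_sym (px m t)), (Rabs_minus_sym (py m t)).
    exact (Hle m n t Hm Hmn Ht).
Qed.

Lemma px_cauchy t : Cauchy_crit (fun n => px n t).
Proof.
  intros eps Heps. destruct (picard_uniform_cauchy (Rabs t) eps Heps) as [N HN].
  exists N. intros n m Hn Hm. specialize (HN m n t Hm Hn (Rle_refl _)).
  pose proof (Rabs_pos (py n t - py m t)). unfold R_dist. lra.
Qed.

Lemma py_cauchy t : Cauchy_crit (fun n => py n t).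
Proof.
  intros eps Heps. destruct (picard_uniform_cauchy (Rabs t) eps Heps) as [N HN].
  exists N. intros n m Hn Hm. specialize (HN m n t Hm Hn (Rle_refl _)).
  pose proof (Rabs_pos (px n t - px m t)). unfold R_dist. lra.
Qed.

Definition x_lim t := proj1_sig (Rcomplete.R_complete _ (px_cauchy t)).
Definition y_lim t := proj1_sig (Rcomplete.R_complete _ (py_cauchy t)).

Lemma px_cv t : Un_cv (fun n => px n t) (x_lim t).
Proof. exact (proj2_sig (Rcomplete.R_complete _ (px_cauchy t))). Qed.

Lemma py_cv t : Un_cv (fun n => py n t) (y_lim t).
Proof. exact (proj2_sig (Rcomplete.R_complete _ (py_cauchy t))). Qed.

Lemma picard_uniform_cv T eps : 0 < eps -> exists N, forall n t,
  (N <= n)%nat -> Rabs t <= T -> Rabs (x_lim t - px n t) + Rabs (y_lim t - py n t) < eps.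
Proof.
  intro Heps. destruct (picard_uniform_cauchy T (eps / 2)) as [N HN]; [lra |].
  exists N. intros n t Hn Ht.
  destruct (px_cv t (eps / 4) ltac:(lra)) as [Nx Hx].
  destruct (py_cv t (eps / 4) ltac:(lra)) as [Ny Hy].
  set (m := max N (max Nx Ny)).
  specialize (HN n m t Hn ltac:(unfold m; lia) Ht).
  specialize (Hx m ltac:(unfold m; lia)). specialize (Hy m ltac:(unfold m; lia)).
  unfold R_dist in Hx, Hy.
  assert (Tx := Rabs_triang (x_lim t - px m t) (px m t - px n t)).
  assert (Ty := Rabs_triang (y_lim t - py m t) (py m t - py n t)).
  rewrite Rabs_minus_sym in Hx, Hy.
  replace (x_lim t - px m t + (px m t - px n t)) with (x_lim t - px n t) in Tx by ring.
  replace (y_lim t - py m t + (py m t - py n t)) with (y_lim t - py n t) in Ty by ring.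
  lra.
Qed.

Lemma picard_field_cvu G (T : posreal) : lipschitz2 L G ->
  CVU (fun n => picard_field n G) (fun s => G (x_lim (Rmax 0 s)) (y_lim (Rmax 0 s))) 0 T.
Proof.
  intros HG eps Heps.
  destruct (picard_uniform_cv T (eps / L)) as [N HN]; [apply Rdiv_lt_0_compat; lra |].
  exists N. intros n s Hn Hs. unfold Boule in Hs. rewrite Rminus_0_r in Hs.
  specialize (HN n (Rmax 0 s) Hn (Rlt_le _ _ (Rle_lt_trans _ _ _ (Rabs_Rmax0_le s) Hs))).
  unfold picard_field. eapply Rle_lt_trans; [apply HG |].
  replace eps with (L * (eps / L)) by (field; lra).
  apply Rmult_lt_compat_l; lra.
Qed.

Lemma picard_limit_derive t :
  derivable_pt_lim x_lim t (G1 (x_lim (Rmax 0 t)) (y_lim (Rmax 0 t))) /\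
  derivable_pt_lim y_lim t (G2 (x_lim (Rmax 0 t)) (y_lim (Rmax 0 t))).
Proof.
  assert (Hr : 0 < Rabs t + 1) by (pose proof (Rabs_pos t); lra).
  set (T := mkposreal _ Hr).
  assert (Ht : Boule 0 T t) by (unfold Boule; simpl; rewrite Rminus_0_r; lra).
  assert (Hshift : forall (p : nat -> R -> R) l x,
      Un_cv (fun n => p n x) l -> Un_cv (fun n => p (S n) x) l).
  { intros p l x Hcv e He. destruct (Hcv e He) as [N HN].
    exists N. intros n Hn. apply HN. lia. }
  split.
  - apply (CVU_derivable (fun n => px (S n)) (fun n => picard_field n G1) x_lim
      (fun s => G1 (x_lim (Rmax 0 s)) (y_lim (Rmax 0 s))) 0 T);
      [apply picard_field_cvu, HG1 | intros x _; apply Hshift, px_cv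
      | intros n x _; apply px_derive | exact Ht].
  - apply (CVU_derivable (fun n => py (S n)) (fun n => picard_field n G2) y_lim
      (fun s => G2 (x_lim (Rmax 0 s)) (y_lim (Rmax 0 s))) 0 T);
      [apply picard_field_cvu, HG2 | intros x _; apply Hshift, py_cv
      | intros n x _; apply py_derive | exact Ht].
Qed.

Lemma x_lim_0 : x_lim 0 = x0.
Proof.
  apply (UL_sequence (fun n => px n 0)); [apply px_cv |].
  intros e He. exists O. intros n _. rewrite px_0. unfold R_dist.
  rewrite Rminus_eq_0, Rabs_R0. exact He.
Qed.

Lemma y_lim_0 : y_lim 0 = y0.
Proof.
  apply (UL_sequence (fun n => py n 0)); [apply py_cv |].
  intros e He. exists O. intros n _. rewrite py_0. unfold R_dist.
  rewrite Rminus_eq_0, Rabs_R0. exact He.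
Qed.

End Picard.

Theorem bounded_lipschitz_ode_solution (G1 G2 : R -> R -> R) (L M x0 y0 : R) :
  0 < L -> 0 <= M -> lipschitz2 L G1 -> lipschitz2 L G2 ->
  (forall a b, Rabs (G1 a b) <= M) -> (forall a b, Rabs (G2 a b) <= M) ->
  exists x y : R -> R, x 0 = x0 /\ y 0 = y0 /\
    forall t, 0 <= t -> derivable_pt_lim x t (G1 (x t) (y t)) /\
                        derivable_pt_lim y t (G2 (x t) (y t)).
Proof.
  intros HL HM HG1 HG2 HB1 HB2.
  exists (x_lim G1 G2 L M x0 y0 HL HM HG1 HG2 HB1 HB2),
         (y_lim G1 G2 L M x0 y0 HL HM HG1 HG2 HB1 HB2).
  split; [apply x_lim_0 |]. split; [apply y_lim_0 |].
  intros t Ht.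
  destruct (picard_limit_derive G1 G2 L M x0 y0 HL HM HG1 HG2 HB1 HB2 t) as [Dx Dy].
  rewrite Rmax_right in Dx, Dy by exact Ht. exact (conj Dx Dy).
Qed.

Definition clamp01 (a : R) : R := Rmax 0 (Rmin 1 a).

Lemma clamp01_range a : 0 <= clamp01 a <= 1.
Proof. unfold clamp01, Rmax, Rmin; repeat destruct Rle_dec; lra. Qed.

Lemma clamp01_id a : 0 <= a <= 1 -> clamp01 a = a.
Proof. unfold clamp01, Rmax, Rmin; repeat destruct Rle_dec; lra. Qed.

Lemma clamp01_neg a : a < 0 -> clamp01 a = 0.
Proof. unfold clamp01, Rmax, Rmin; repeat destruct Rle_dec; lra. Qed.

Lemma clamp01_add_ge1 a b : 0 <= a -> 0 <= b -> 1 <= a + b -> 1 <= clamp01 a + clamp01 b.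
Proof. unfold clamp01, Rmax, Rmin; repeat destruct Rle_dec; lra. Qed.

Lemma clamp01_lipschitz a b : Rabs (clamp01 a - clamp01 b) <= Rabs (a - b).
Proof.
  unfold clamp01, Rmax, Rmin; repeat destruct Rle_dec; unfold Rabs;
    repeat destruct Rcase_abs; lra.
Qed.

Lemma lipschitz2_swap L G : lipschitz2 L G -> lipschitz2 L (fun a b => G b a).
Proof. intros HG a b a' b'. rewrite Rplus_comm. apply HG. Qed.

Lemma fL_swap bH bL gH gL qHL qLH al z IH IL :
  fL bH bL gH gL qHL qLH al z IH IL = fH bL bH gL gH qLH qHL al z IL IH.
Proof. unfold fL, fH. ring. Qed.

Lemma logistic_lipschitz u v u' v' :
  0 <= u <= 1 -> 0 <= v <= 1 -> 0 <= u' <= 1 -> 0 <= v' <= 1 ->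
  Rabs (u * (1 - u - v) - u' * (1 - u' - v')) <= 2 * Rabs (u - u') + Rabs (v - v').
Proof.
  intros. replace (u * (1 - u - v) - u' * (1 - u' - v'))
    with ((u - u') * (1 - u - v) - u' * ((u - u') + (v - v'))) by ring.
  unfold Rabs; repeat destruct Rcase_abs; nra.
Qed.

Lemma Rabs_lin3 a b c x y w : 0 <= a -> 0 <= b -> 0 <= c ->
  Rabs (a * x + b * y - c * w) <= a * Rabs x + b * Rabs y + c * Rabs w.
Proof.
  intros Ha Hb Hc. unfold Rminus.
  eapply Rle_trans; [apply Rabs_triang |].
  eapply Rle_trans; [apply Rplus_le_compat_r, Rabs_triang |].
  rewrite Rabs_Ropp, !Rabs_mult, (Rabs_pos_eq a), (Rabs_pos_eq b), (Rabs_pos_eq c)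
    by assumption.
  lra.
Qed.

Section ClampedField.

Variables (bH bL gH gL qHL qLH al z : R).
Hypotheses (HbH : 0 <= beta_hat al bH z) (HqHL : 0 <= qHL) (HqLH : 0 <= qLH)
  (HgH : 0 <= gH).

Lemma fH_clamped_lipschitz K : 2 * beta_hat al bH z + qLH + qHL + gH <= K ->
  lipschitz2 K (fun a b => fH bH bL gH gL qHL qLH al z (clamp01 a) (clamp01 b)).
Proof.
  intros HK a b a' b'.
  pose proof (clamp01_lipschitz a a'). pose proof (clamp01_lipschitz b b').
  pose proof (logistic_lipschitz _ _ _ _ (clamp01_range a) (clamp01_range b)
    (clamp01_range a') (clamp01_range b')).
  set (u := clamp01 a) in *. set (v := clamp01 b) in *.
  set (u' := clamp01 a') in *. set (v' := clamp01 b') in *.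
  set (bh := beta_hat al bH z) in *.
  replace (fH bH bL gH gL qHL qLH al z u v - fH bH bL gH gL qHL qLH al z u' v')
    with (bh * (u * (1 - u - v) - u' * (1 - u' - v')) + qLH * (v - v')
          - (qHL + gH) * (u - u')) by (unfold fH; fold bh; ring).
  eapply Rle_trans; [apply Rabs_lin3; lra |].
  pose proof (Rabs_pos (a - a')). pose proof (Rabs_pos (b - b')).
  pose proof (Rabs_pos (u - u')). pose proof (Rabs_pos (v - v')).
  nra.
Qed.

Lemma fH_clamped_bounded K : beta_hat al bH z + qLH + qHL + gH <= K ->
  forall a b, Rabs (fH bH bL gH gL qHL qLH al z (clamp01 a) (clamp01 b)) <= K.
Proof.
  intros HK a b.
  pose proof (clamp01_range a). pose proof (clamp01_range b).
  set (u := clamp01 a) in *. set (v := clamp01 b) in *.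
  set (bh := beta_hat al bH z) in *.
  replace (fH bH bL gH gL qHL qLH al z u v)
    with (bh * (u * (1 - u - v)) + qLH * v - (qHL + gH) * u) by (unfold fH; fold bh; ring).
  eapply Rle_trans; [apply Rabs_lin3; lra |].
  assert (Rabs (u * (1 - u - v)) <= 1) by (apply Rabs_le; nra).
  rewrite (Rabs_pos_eq u), (Rabs_pos_eq v) by lra.
  nra.
Qed.

End ClampedField.

Lemma derivable_pt_lim_mult_exp (x : R -> R) dx c s : derivable_pt_lim x s dx ->
  derivable_pt_lim (fun s => x s * exp (c * s)) s
    (dx * exp (c * s) + x s * (exp (c * s) * c)).
Proof.
  intro Hx. apply (derivable_pt_lim_mult x (fun s => exp (c * s))); [exact Hx |].
  apply (derivable_pt_lim_comp (fun s => c * s) exp s c (exp (c * s))).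
  - pose proof (derivable_pt_lim_scal id c s 1 (derivable_pt_lim_id s)) as Hlin.
    rewrite Rmult_1_r in Hlin. exact Hlin.
  - apply derivable_pt_lim_exp.
Qed.

Section BiVirusDynamics.

Variables (bH bL gH gL qHL qLH al z : R).
Hypotheses (HbH : 0 <= beta_hat al bH z) (HbL : 0 <= beta_hat al bL z)
  (HqHL : 0 <= qHL) (HqLH : 0 <= qLH) (HgH : 0 <= gH) (HgL : 0 <= gL).

Let FH := fH bH bL gH gL qHL qLH al z.
Let FL := fL bH bL gH gL qHL qLH al z.

Lemma clamped_solution_exists x0 y0 : exists x y, x 0 = x0 /\ y 0 = y0 /\
  forall t, 0 <= t ->
    derivable_pt_lim x t (FH (clamp01 (x t)) (clamp01 (y t))) /\
    derivable_pt_lim y t (FL (clamp01 (x t)) (clamp01 (y t))).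
Proof.
  set (K := 2 * beta_hat al bH z + 2 * beta_hat al bL z + qHL + qLH + gH + gL + 1).
  assert (HK : 0 < K) by (unfold K; lra).
  apply (bounded_lipschitz_ode_solution (fun a b => FH (clamp01 a) (clamp01 b))
    (fun a b => FL (clamp01 a) (clamp01 b)) K K x0 y0 HK (Rlt_le _ _ HK)).
  - apply fH_clamped_lipschitz; unfold K; lra.
  - intros a b a' b'. unfold FL. rewrite !fL_swap.
    exact (lipschitz2_swap _ _ (fH_clamped_lipschitz bL bH gL gH qLH qHL al z
      HbL HqLH HqHL HgL K ltac:(unfold K; lra)) a b a' b').
  - apply fH_clamped_bounded; unfold K; lra.
  - intros a b. unfold FL. rewrite fL_swap.
    apply (fH_clamped_bounded bL bH gL gH qLH qHL al z HbL HqLH HqHL HgL).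
    unfold K; lra.
Qed.

Lemma feasible_solution_exists x0 y0 : feasible x0 y0 ->
  exists x y, x 0 = x0 /\ y 0 = y0 /\ is_solution bH bL gH gL qHL qLH al z x y /\
    forall t, 0 <= t -> feasible (x t) (y t).
Proof.
  intros [Hx0 [Hy0 Hs0]].
  destruct (clamped_solution_exists x0 y0) as [x [y [Hx0' [Hy0' Hd]]]].
  assert (Hxpos : forall t, 0 <= t -> - x t <= 0).
  { apply (nonpos_preserved (fun t => - x t)
      (fun t => - FH (clamp01 (x t)) (clamp01 (y t)))); [| lra |].
    - intros t Ht. apply (derivable_pt_lim_opp x), Hd, Ht.
    - intros t Ht Hneg. unfold FH, fH. rewrite (clamp01_neg (x t)) by lra.
      pose proof (clamp01_range (y t)). nra. }
  assert (Hypos : forall t, 0 <= t -> - y t <= 0).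
  { apply (nonpos_preserved (fun t => - y t)
      (fun t => - FL (clamp01 (x t)) (clamp01 (y t)))); [| lra |].
    - intros t Ht. apply (derivable_pt_lim_opp y), Hd, Ht.
    - intros t Ht Hneg. unfold FL, fL. rewrite (clamp01_neg (y t)) by lra.
      pose proof (clamp01_range (x t)). nra. }
  assert (Hsum : forall t, 0 <= t -> x t + y t - 1 <= 0).
  { apply (nonpos_preserved (fun t => x t + y t - 1) (fun t =>
      FH (clamp01 (x t)) (clamp01 (y t)) + FL (clamp01 (x t)) (clamp01 (y t)) - 0));
      [| lra |].
    - intros t Ht. apply (derivable_pt_lim_minus (fun t => x t + y t) (fun _ => 1)).
      + apply (derivable_pt_lim_plus x y); apply Hd, Ht.
      + apply derivable_pt_lim_const.
    - intros t Ht Hover. specialize (Hxpos t Ht). specialize (Hypos t Ht).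
      pose proof (clamp01_add_ge1 (x t) (y t) ltac:(lra) ltac:(lra) ltac:(lra)).
      pose proof (clamp01_range (x t)). pose proof (clamp01_range (y t)).
      unfold FH, FL, fH, fL.
      set (u := clamp01 (x t)) in *. set (v := clamp01 (y t)) in *.
      assert (0 <= beta_hat al bH z * u + beta_hat al bL z * v) by nra.
      nra. }
  assert (Hfeas : forall t, 0 <= t -> feasible (x t) (y t)).
  { intros t Ht. specialize (Hxpos t Ht). specialize (Hypos t Ht).
    specialize (Hsum t Ht). unfold feasible. lra. }
  exists x, y. split; [exact Hx0' |]. split; [exact Hy0' |]. split; [| exact Hfeas].
  intros t Ht. destruct (Hd t Ht) as [Dx Dy]. destruct (Hfeas t Ht) as [F1 [F2 F3]].
  rewrite !clamp01_id in Dx, Dy by lra.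
  split; apply is_derive_Reals; assumption.
Qed.

Lemma solution_H_pos x y : is_solution bH bL gH gL qHL qLH al z x y ->
  (forall t, 0 <= t -> feasible (x t) (y t)) -> 0 < x 0 ->
  forall t, 0 <= t -> 0 < x t.
Proof.
  intros Hsol Hfeas Hx0 t Ht.
  set (c := qHL + gH).
  (* on the feasible region [x' >= - c x] *)
  assert (Hgrow : x 0 * exp (c * 0) <= x t * exp (c * t)).
  { apply (le_of_derive_nonneg (fun s => x s * exp (c * s))
      (fun s => FH (x s) (y s) * exp (c * s) + x s * (exp (c * s) * c))); [exact Ht | |].
    - intros s Hs. apply derivable_pt_lim_mult_exp, is_derive_Reals, (Hsol s (proj1 Hs)).
    - intros s Hs. destruct (Hfeas s ltac:(lra)) as [F1 [F2 F3]].
      pose proof (exp_pos (c * s)).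
      assert (0 <= beta_hat al bH z * x s * (1 - x s - y s) + qLH * y s).
      { assert (0 <= x s * (1 - x s - y s)) by nra. nra. }
      unfold FH, fH. fold c. nra. }
  rewrite Rmult_0_r, exp_0, Rmult_1_r in Hgrow.
  pose proof (exp_pos (c * t)). nra.
Qed.

Lemma solution_H_nondecreasing x y T : is_solution bH bL gH gL qHL qLH al z x y ->
  (forall t, 0 <= t -> feasible (x t) (y t)) -> 0 <= T ->
  (forall s, T < s -> qHL + gH <= beta_hat al bH z * (1 - x s - y s)) ->
  forall t, T <= t -> x T <= x t.
Proof.
  intros Hsol Hfeas HT Hrate t Ht.
  apply (le_of_derive_nonneg x (fun s => FH (x s) (y s))); [exact Ht | |].
  - intros s Hs. apply is_derive_Reals, (Hsol s ltac:(lra)).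
  - intros s Hs. destruct (Hfeas s ltac:(lra)) as [F1 [F2 F3]].
    specialize (Hrate s (proj1 Hs)).
    replace (FH (x s) (y s))
      with (x s * (beta_hat al bH z * (1 - x s - y s) - (qHL + gH)) + qLH * y s)
      by (unfold FH, fH; ring).
    nra.
Qed.

(* A solution started at [(d, eL)] with small [d > 0] would converge to
   [(0, eL)]; but near [(0, eL)] strain [H] has a positive growth rate, so
   [x] eventually stops decreasing while staying positive. *)
Lemma H_free_equilibrium_not_stable eL : 0 <= eL < 1 ->
  qHL + gH < beta_hat al bH z * (1 - eL) ->
  ~ is_stable_eq bH bL gH gL qHL qLH al z 0 eL.
Proof.
  intros HeL Hinv [_ [_ [_ [eta [Heta Hattr]]]]].
  set (bh := beta_hat al bH z) in *.
  set (d := Rmin (eta / 2) ((1 - eL) / 2)).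
  assert (Hd : 0 < d /\ d <= eta / 2 /\ d <= (1 - eL) / 2).
  { split; [apply Rmin_pos; lra | split; [apply Rmin_l | apply Rmin_r]]. }
  destruct (feasible_solution_exists d eL) as [x [y [Hx0 [Hy0 [Hsol Hfeas]]]]].
  { unfold feasible. lra. }
  destruct (Hattr x y Hsol) as [Hlimx Hlimy].
  { rewrite Hx0, Hy0. unfold feasible. lra. }
  { rewrite Hx0, Hy0. unfold dist2.
    replace ((d - 0) ^ 2 + (eL - eL) ^ 2) with (d ^ 2) by ring.
    rewrite sqrt_pow2; lra. }
  set (e := (bh * (1 - eL) - (qHL + gH)) / (2 * bh + 2)).
  assert (He : 0 < e) by (apply Rdiv_lt_0_compat; lra).
  assert (Hbhe : bh * (2 * e) + 2 * e = bh * (1 - eL) - (qHL + gH))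
    by (unfold e; field; lra).
  destruct (proj2 (is_lim_spec _ _ _) Hlimx (mkposreal e He)) as [T1 HT1].
  destruct (proj2 (is_lim_spec _ _ _) Hlimy (mkposreal e He)) as [T2 HT2].
  simpl in HT1, HT2.
  set (T := Rmax 0 (Rmax T1 T2)).
  assert (HT : 0 <= T /\ T1 <= T /\ T2 <= T).
  { pose proof (Rmax_l 0 (Rmax T1 T2)). pose proof (Rmax_r 0 (Rmax T1 T2)).
    pose proof (Rmax_l T1 T2). pose proof (Rmax_r T1 T2). unfold T. lra. }
  assert (Hrate : forall s, T < s -> qHL + gH <= bh * (1 - x s - y s)).
  { intros s Hs. specialize (HT1 s ltac:(lra)). specialize (HT2 s ltac:(lra)).
    rewrite Rminus_0_r in HT1. apply Rabs_def2 in HT1. apply Rabs_def2 in HT2. nra. }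
  apply (not_is_lim_0_of_nondecreasing x T); [| | exact Hlimx].
  - apply (solution_H_pos x y Hsol Hfeas); [rewrite Hx0 |]; lra.
  - exact (solution_H_nondecreasing x y T Hsol Hfeas (proj1 HT) Hrate).
Qed.

End BiVirusDynamics.

Definition exposure (al z : R) : R := al * z + 1 - z.

Definition eff_susceptible (al z IH IL : R) : R := exposure al z * (1 - IH - IL).

Lemma exposure_bounds al z : 0 < al < 1 -> 0 <= z <= 1 -> al <= exposure al z <= 1.
Proof. unfold exposure. nra. Qed.

Lemma equilibrium_balance bH bL gH gL qHL qLH al z IH IL :
  is_equilibrium bH bL gH gL qHL qLH al z IH IL ->
  (qHL + gH - bH * eff_susceptible al z IH IL) * IH = qLH * IL /\
  (qLH + gL - bL * eff_susceptible al z IH IL) * IL = qHL * IH.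
Proof.
  unfold is_equilibrium, fH, fL, beta_hat, eff_susceptible, exposure.
  intros [E1 E2]. split; lra.
Qed.

Lemma endemic_mutation_pos bH bL gH gL qHL qLH al z IH IL :
  0 < bH -> 0 < bL -> 0 <= qHL -> 0 <= qLH -> bL * gH < bH * gL ->
  is_endemic_eq bH bL gH gL qHL qLH al z IH IL -> 0 < qHL.
Proof.
  intros HbH HbL HqHL HqLH Hratio [Heq [HIH HIL]].
  destruct (equilibrium_balance _ _ _ _ _ _ _ _ _ _ Heq) as [E1 E2].
  set (w := eff_susceptible al z IH IL) in *.
  destruct (Rle_lt_or_eq_dec 0 qHL HqHL) as [| Hq0]; [assumption | exfalso].
  rewrite <- Hq0 in E1, E2.
  (* with [qHL = 0] the balance forces [gH / bH >= w = (qLH + gL) / bL >= gL / bL] *)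
  assert (HwL : qLH + gL - bL * w = 0).
  { apply (Rmult_eq_reg_r IL); lra. }
  assert (HwH : 0 <= 0 + gH - bH * w) by nra.
  nra.
Qed.

Lemma endemic_balance_signs bH bL gH gL qHL qLH al z IH IL :
  0 < qHL -> 0 <= qLH -> is_endemic_eq bH bL gH gL qHL qLH al z IH IL ->
  let w := eff_susceptible al z IH IL in
  0 <= qHL + gH - bH * w /\ 0 < qLH + gL - bL * w /\
  (qHL + gH - bH * w) * (qLH + gL - bL * w) = qLH * qHL.
Proof.
  intros HqHL HqLH [Heq [HIH HIL]] w.
  destruct (equilibrium_balance _ _ _ _ _ _ _ _ _ _ Heq) as [E1 E2]. fold w in E1, E2.
  assert (HaH : 0 <= qHL + gH - bH * w) by nra.
  assert (HaL : 0 < qLH + gL - bL * w) by nra.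
  split; [exact HaH | split; [exact HaL |]].
  apply (Rmult_eq_reg_r (IH * IL)); [| nra].
  transitivity (((qHL + gH - bH * w) * IH) * ((qLH + gL - bL * w) * IL)); [ring |].
  rewrite E1, E2. ring.
Qed.

(* Both factors decrease strictly in [w], so their product takes the value
   [qLH * qHL] at most once where they are nonnegative. *)
Lemma balance_root_unique bH bL gH gL qHL qLH w1 w2 : 0 < bH -> 0 < bL ->
  0 <= qHL + gH - bH * w1 -> 0 < qLH + gL - bL * w1 ->
  (qHL + gH - bH * w1) * (qLH + gL - bL * w1) = qLH * qHL ->
  0 <= qHL + gH - bH * w2 -> 0 < qLH + gL - bL * w2 ->
  (qHL + gH - bH * w2) * (qLH + gL - bL * w2) = qLH * qHL -> w1 = w2.
Proof.
  intros HbH HbL A1 B1 C1 A2 B2 C2.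
  destruct (Rtotal_order w1 w2) as [Hlt | [Heq | Hgt]]; [exfalso | exact Heq | exfalso].
  - assert (qHL + gH - bH * w2 < qHL + gH - bH * w1) by nra.
    assert (qLH + gL - bL * w2 < qLH + gL - bL * w1) by nra. nra.
  - assert (qHL + gH - bH * w1 < qHL + gH - bH * w2) by nra.
    assert (qLH + gL - bL * w1 < qLH + gL - bL * w2) by nra. nra.
Qed.

Lemma endemic_eff_susceptible_eq bH bL gH gL qHL qLH al z1 IH1 IL1 z2 IH2 IL2 :
  0 < bH -> 0 < bL -> 0 < qHL -> 0 <= qLH ->
  is_endemic_eq bH bL gH gL qHL qLH al z1 IH1 IL1 ->
  is_endemic_eq bH bL gH gL qHL qLH al z2 IH2 IL2 ->
  eff_susceptible al z1 IH1 IL1 = eff_susceptible al z2 IH2 IL2.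
Proof.
  intros HbH HbL HqHL HqLH H1 H2.
  destruct (endemic_balance_signs _ _ _ _ _ _ _ _ _ _ HqHL HqLH H1) as [A1 [B1 C1]].
  destruct (endemic_balance_signs _ _ _ _ _ _ _ _ _ _ HqHL HqLH H2) as [A2 [B2 C2]].
  exact (balance_root_unique _ _ _ _ _ _ _ _ HbH HbL A1 B1 C1 A2 B2 C2).
Qed.

Section Game.

Variables (bH bL gH gL qHL qLH al rhoH rhoL CP : R).
Hypotheses (HbH : 0 < bH) (HbL : 0 < bL) (HgH : 0 < gH) (HgL : 0 < gL)
  (Hratio : bH / gH > bL / gL) (Hbeta : bH > bL)
  (HqHL : 0 <= qHL) (HqLH : 0 <= qLH) (Hal : 0 < al < 1)
  (HrhoH : 0 < rhoH) (HrhoL : 0 < rhoL)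
  (Hcond : Rmax (qLH + gL) (qHL + gH)
           <= Rmin (beta_hat al bH 1) (beta_hat al bL 1)).
Variables (IHs ILs : R -> R).
Hypothesis (Hend : forall z, 0 <= z <= 1 ->
  is_endemic_eq bH bL gH gL qHL qLH al z (IHs z) (ILs z)).

Lemma qHL_pos : 0 < qHL.
Proof.
  apply (endemic_mutation_pos bH bL gH gL qHL qLH al 0 (IHs 0) (ILs 0)); try assumption.
  - apply (Rmult_lt_reg_r (/ (gH * gL))); [apply Rinv_0_lt_compat; nra |].
    replace (bL * gH * / (gH * gL)) with (bL / gL) by (field; lra).
    replace (bH * gL * / (gH * gL)) with (bH / gH) by (field; lra).
    exact Hratio.
  - apply (Hend 0). lra.
Qed.

Lemma outflow_H_le : qHL + gH <= al * bL.
Proof.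
  pose proof (Rmax_r (qLH + gL) (qHL + gH)).
  pose proof (Rmin_r (beta_hat al bH 1) (beta_hat al bL 1)).
  unfold beta_hat in *. nra.
Qed.

Definition w0 : R := eff_susceptible al 0 (IHs 0) (ILs 0).

Definition aL0 : R := qLH + gL - bL * w0.

Lemma endemic_eff_susceptible z IH IL :
  is_endemic_eq bH bL gH gL qHL qLH al z IH IL -> eff_susceptible al z IH IL = w0.
Proof.
  intro H. apply (endemic_eff_susceptible_eq bH bL gH gL qHL qLH); try assumption.
  - exact qHL_pos.
  - apply (Hend 0). lra.
Qed.

Lemma aL0_pos : 0 < aL0.
Proof.
  exact (proj1 (proj2 (endemic_balance_signs bH bL gH gL qHL qLH al 0 (IHs 0) (ILs 0)
    qHL_pos HqLH (Hend 0 ltac:(lra))))).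
Qed.

Lemma w0_pos : 0 < w0.
Proof.
  destruct (endemic_balance_signs bH bL gH gL qHL qLH al 0 (IHs 0) (ILs 0)
    qHL_pos HqLH (Hend 0 ltac:(lra))) as [HaH [_ Hprod]].
  fold w0 in HaH, Hprod. fold aL0 in Hprod.
  destruct (Rlt_le_dec 0 w0) as [| Hw]; [assumption | exfalso].
  (* for [w0 <= 0] each factor is at least [qHL + gH], resp. [qLH + gL], so their
     product would exceed [qLH * qHL] *)
  assert (qHL + gH <= qHL + gH - bH * w0) by nra.
  assert (qLH + gL <= aL0) by (unfold aL0; nra).
  pose proof qHL_pos. nra.
Qed.

Lemma endemic_ratio z IH IL :
  is_endemic_eq bH bL gH gL qHL qLH al z IH IL -> qHL * IH = aL0 * IL.
Proof.
  intro H. destruct (equilibrium_balance _ _ _ _ _ _ _ _ _ _ (proj1 H)) as [_ E2].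
  rewrite (endemic_eff_susceptible z IH IL H) in E2. unfold aL0. lra.
Qed.

Lemma endemic_total z IH IL : 0 <= z <= 1 ->
  is_endemic_eq bH bL gH gL qHL qLH al z IH IL -> IH + IL = 1 - w0 / exposure al z.
Proof.
  intros Hz H. pose proof (exposure_bounds al z Hal Hz).
  rewrite <- (endemic_eff_susceptible z IH IL H). unfold eff_susceptible. field. lra.
Qed.

Lemma endemic_unique z IH IL : 0 <= z <= 1 ->
  is_endemic_eq bH bL gH gL qHL qLH al z IH IL -> IH = IHs z /\ IL = ILs z.
Proof.
  intros Hz H. pose proof (Hend z Hz) as Hs.
  pose proof (endemic_total z IH IL Hz H). pose proof (endemic_total z _ _ Hz Hs).
  pose proof (endemic_ratio z IH IL H). pose proof (endemic_ratio z _ _ Hs).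
  pose proof qHL_pos. pose proof w0_pos. pose proof aL0_pos.
  assert (HIL : IL = ILs z).
  { apply (Rmult_eq_reg_l (qHL + aL0)); [nra | lra]. }
  split; lra.
Qed.

Lemma H_free_equilibrium_invadable z eL : 0 <= z <= 1 -> 0 <= eL ->
  is_equilibrium bH bL gH gL qHL qLH al z 0 eL ->
  eL < 1 /\ qHL + gH < beta_hat al bH z * (1 - eL).
Proof.
  intros Hz HeL [EH EL]. unfold fH, fL in EH, EL.
  pose proof (exposure_bounds al z Hal Hz). pose proof outflow_H_le.
  unfold beta_hat in *. fold (exposure al z) in *.
  destruct (Rle_lt_or_eq_dec 0 eL HeL) as [HeL0 | <-]; [| split; nra].
  assert (HqLH0 : qLH = 0) by nra.
  (* with [qLH = 0] the balance at the endemic equilibrium gives [bH w0 = qHL + gH] *)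
  destruct (endemic_balance_signs bH bL gH gL qHL qLH al z (IHs z) (ILs z)
    qHL_pos HqLH (Hend z Hz)) as [_ [HaL Hprod]].
  rewrite (endemic_eff_susceptible z _ _ (Hend z Hz)) in HaL, Hprod.
  rewrite HqLH0, Rmult_0_l in Hprod. rewrite HqLH0 in HaL.
  apply Rmult_integral in Hprod as [HaH | HaL0]; [| lra].
  assert (Hbal : bL * exposure al z * (1 - eL) = gL).
  { apply (Rmult_eq_reg_r eL); [rewrite HqLH0 in EL; nra | lra]. }
  assert (HeL1 : eL < 1).
  { destruct (Rlt_le_dec eL 1) as [| Hge]; [assumption | exfalso].
    assert (0 < bL * exposure al z) by nra. nra. }
  split; [exact HeL1 | nra].
Qed.

Lemma stable_eq_endemic z IH IL : 0 <= z <= 1 ->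
  is_stable_eq bH bL gH gL qHL qLH al z IH IL ->
  is_endemic_eq bH bL gH gL qHL qLH al z IH IL.
Proof.
  intros Hz Hst. pose proof Hst as [[F1 [F2 F3]] [Heq _]].
  pose proof (exposure_bounds al z Hal Hz). pose proof qHL_pos.
  destruct (Rle_lt_or_eq_dec 0 IH F1) as [HIH | <-].
  - destruct (Rle_lt_or_eq_dec 0 IL F2) as [HIL | <-].
    + split; [exact Heq | lra].
    + exfalso. destruct Heq as [_ EL]. unfold fL in EL. nra.
  - exfalso.
    destruct (H_free_equilibrium_invadable z IL Hz F2 Heq) as [HIL Hinv].
    assert (Hrate : forall b, 0 < b -> 0 <= beta_hat al b z).
    { intros b Hb. unfold beta_hat. fold (exposure al z). nra. }
    exact (H_free_equilibrium_not_stable bH bL gH gL qHL qLH al z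
      (Hrate bH HbH) (Hrate bL HbL) HqHL HqLH (Rlt_le _ _ HgH) (Rlt_le _ _ HgL)
      IL (conj F2 HIL) Hinv Hst).
Qed.

Lemma ne_state IH IL z :
  is_stationary_NE bH bL gH gL qHL qLH al rhoH rhoL CP IH IL z ->
  0 <= z <= 1 /\ IH = IHs z /\ IL = ILs z.
Proof.
  intros [Hz [Hst _]]. split; [exact Hz |].
  apply endemic_unique; [exact Hz |]. apply stable_eq_endemic; assumption.
Qed.

Definition payoff_gap (z : R) : R := DeltaR bH bL al rhoH rhoL CP (IHs z) (ILs z).

Definition loss_weight : R := (rhoH * bH * aL0 + rhoL * bL * qHL) / (qHL + aL0).

Lemma loss_weight_pos : 0 < loss_weight.
Proof.
  pose proof qHL_pos. pose proof w0_pos. pose proof aL0_pos.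
  unfold loss_weight. apply Rdiv_lt_0_compat; [| lra].
  apply Rplus_lt_0_compat; apply Rmult_lt_0_compat; try apply Rmult_lt_0_compat; lra.
Qed.

(* The ratio [IH : IL = aL0 : qHL] does not depend on [z], so the expected
   loss is a fixed multiple of the total infected fraction. *)
Lemma payoff_gap_formula z : 0 <= z <= 1 ->
  payoff_gap z = - CP + (1 - al) * loss_weight * (1 - w0 / exposure al z).
Proof.
  intro Hz. pose proof qHL_pos. pose proof w0_pos. pose proof aL0_pos.
  pose proof (endemic_ratio z _ _ (Hend z Hz)) as Hratio_z.
  rewrite <- (endemic_total z _ _ Hz (Hend z Hz)).
  assert (Hloss : rhoH * bH * IHs z + rhoL * bL * ILs z = loss_weight * (IHs z + ILs z)).
  { apply (Rmult_eq_reg_l (qHL + aL0)); [| lra]. unfold loss_weight.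
    replace ((qHL + aL0) * ((rhoH * bH * aL0 + rhoL * bL * qHL) / (qHL + aL0)
      * (IHs z + ILs z))) with ((rhoH * bH * aL0 + rhoL * bL * qHL) * (IHs z + ILs z))
      by (field; lra).
    replace ((qHL + aL0) * (rhoH * bH * IHs z + rhoL * bL * ILs z))
      with ((rhoH * bH * aL0 + rhoL * bL * qHL) * (IHs z + ILs z)
            + (rhoH * bH - rhoL * bL) * (qHL * IHs z - aL0 * ILs z)) by ring.
    rewrite Hratio_z. ring. }
  unfold payoff_gap, DeltaR. rewrite Hloss. ring.
Qed.

Lemma payoff_gap_decreasing z1 z2 : 0 <= z1 -> z1 < z2 -> z2 <= 1 ->
  payoff_gap z2 < payoff_gap z1.
Proof.
  intros H1 H12 H2.
  rewrite !payoff_gap_formula by lra.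
  pose proof (exposure_bounds al z1 Hal ltac:(lra)).
  pose proof (exposure_bounds al z2 Hal ltac:(lra)).
  assert (He : exposure al z2 < exposure al z1) by (unfold exposure; nra).
  pose proof loss_weight_pos. pose proof w0_pos. pose proof aL0_pos.
  assert (w0 / exposure al z1 < w0 / exposure al z2).
  { apply Rmult_lt_compat_l; [lra |]. apply Rinv_lt_contravar; nra. }
  assert (0 < (1 - al) * loss_weight) by nra.
  nra.
Qed.

Lemma payoff_gap_injective z1 z2 : 0 <= z1 <= 1 -> 0 <= z2 <= 1 ->
  payoff_gap z1 = payoff_gap z2 -> z1 = z2.
Proof.
  intros H1 H2 Heq.
  destruct (Rtotal_order z1 z2) as [Hlt | [Hz | Hgt]]; [exfalso | exact Hz | exfalso].
  - pose proof (payoff_gap_decreasing z1 z2 ltac:(lra) Hlt ltac:(lra)). lra.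
  - pose proof (payoff_gap_decreasing z2 z1 ltac:(lra) Hgt ltac:(lra)). lra.
Qed.

Lemma payoff_gap_root : payoff_gap 1 <= 0 <= payoff_gap 0 ->
  exists z0, 0 <= z0 <= 1 /\ payoff_gap z0 = 0.
Proof.
  rewrite !payoff_gap_formula by lra. unfold exposure.
  replace (al * 0 + 1 - 0) with 1 by ring. replace (al * 1 + 1 - 1) with al by ring.
  intros [H1 H0].
  pose proof loss_weight_pos. pose proof w0_pos. pose proof aL0_pos.
  set (k := (1 - al) * loss_weight) in *.
  assert (Hk : 0 < k) by (unfold k; nra).
  (* solve [exposure al z0 = w0 / s] with [s = 1 - CP / k] *)
  set (s := 1 - CP / k).
  assert (Hs0 : w0 <= s).
  { unfold s. apply (Rmult_le_reg_l k); [lra |].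
    replace (k * (1 - CP / k)) with (k - CP) by (field; lra). lra. }
  assert (Hs1 : s * al <= w0).
  { unfold s. apply (Rmult_le_reg_l (k / al)); [apply Rdiv_lt_0_compat; lra |].
    replace (k / al * ((1 - CP / k) * al)) with (k - CP) by (field; lra).
    replace (k / al * w0) with (k * (w0 / al)) by (field; lra). lra. }
  set (c0 := w0 / s).
  assert (Hc0 : c0 * s = w0) by (unfold c0; field; lra).
  assert (Hc0_range : al <= c0 <= 1) by (split; nra).
  set (z0 := (1 - c0) / (1 - al)).
  assert (Hz0 : z0 * (1 - al) = 1 - c0) by (unfold z0; field; lra).
  assert (Hz0_range : 0 <= z0 <= 1) by (split; nra).
  exists z0. split; [exact Hz0_range |].
  rewrite payoff_gap_formula by exact Hz0_range.
  replace (exposure al z0) with c0 by (unfold exposure; lra).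
  fold k. replace (w0 / c0) with s by (unfold c0; field; lra).
  unfold s. field. lra.
Qed.

Lemma ne_full_protection :
  CP < (1 - al) * (bH * rhoH * IHs 1 + bL * rhoL * ILs 1) ->
  forall IH IL z, is_stationary_NE bH bL gH gL qHL qLH al rhoH rhoL CP IH IL z -> z = 1.
Proof.
  intros Hlt IH IL z Hne.
  destruct (ne_state IH IL z Hne) as [Hz [-> ->]].
  destruct Hne as [_ [_ [_ [_ [_ [Hpos _]]]]]]. apply Hpos.
  change (payoff_gap z > 0).
  assert (H1 : 0 < payoff_gap 1) by (unfold payoff_gap, DeltaR; lra).
  destruct (Req_dec z 1) as [-> | Hz1]; [exact H1 |].
  pose proof (payoff_gap_decreasing z 1 ltac:(lra) ltac:(lra) ltac:(lra)). lra.
Qed.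

Lemma ne_no_protection :
  CP > (1 - al) * (bH * rhoH * IHs 0 + bL * rhoL * ILs 0) ->
  forall IH IL z, is_stationary_NE bH bL gH gL qHL qLH al rhoH rhoL CP IH IL z -> z = 0.
Proof.
  intros Hgt IH IL z Hne.
  destruct (ne_state IH IL z Hne) as [Hz [-> ->]].
  destruct Hne as [_ [_ [_ [Hneg _]]]]. apply Hneg.
  change (payoff_gap z < 0).
  assert (H0 : payoff_gap 0 < 0) by (unfold payoff_gap, DeltaR; lra).
  destruct (Req_dec z 0) as [-> | Hz0]; [exact H0 |].
  pose proof (payoff_gap_decreasing 0 z ltac:(lra) ltac:(lra) ltac:(lra)). lra.
Qed.

Lemma ne_interior_level :
  (1 - al) * (bH * rhoH * IHs 1 + bL * rhoL * ILs 1) <= CP <=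
    (1 - al) * (bH * rhoH * IHs 0 + bL * rhoL * ILs 0) ->
  exists z0, (0 <= z0 <= 1 /\ DeltaR bH bL al rhoH rhoL CP (IHs z0) (ILs z0) = 0) /\
    (forall z, 0 <= z <= 1 -> DeltaR bH bL al rhoH rhoL CP (IHs z) (ILs z) = 0 -> z = z0) /\
    (forall IH IL z,
       is_stationary_NE bH bL gH gL qHL qLH al rhoH rhoL CP IH IL z -> z = z0).
Proof.
  intros [Hmin Hmax].
  destruct payoff_gap_root as [z0 [Hz0 Hroot]]; [unfold payoff_gap, DeltaR; lra |].
  assert (Huniq : forall z, 0 <= z <= 1 -> payoff_gap z = 0 -> z = z0).
  { intros z Hz Hzero. apply payoff_gap_injective; [exact Hz | exact Hz0 | lra]. }
  exists z0. split; [split; assumption |]. split; [exact Huniq |].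
  intros IH IL z Hne. destruct (ne_state IH IL z Hne) as [Hz [-> ->]].
  destruct Hne as [_ [_ [Hnone [_ [Hfull [_ Hmixed]]]]]].
  apply Huniq; [exact Hz |].
  destruct (Req_dec z 0) as [-> | Hz0'].
  { specialize (Hnone eq_refl). unfold payoff_gap, DeltaR in *. lra. }
  destruct (Req_dec z 1) as [-> | Hz1'].
  { specialize (Hfull eq_refl). unfold payoff_gap, DeltaR in *. lra. }
  apply Hmixed. lra.
Qed.

End Game.

Theorem theorem4
  (bH bL gH gL qHL qLH al rhoH rhoL CP : R)
  (HbH : 0 < bH) (HbL : 0 < bL) (HgH : 0 < gH) (HgL : 0 < gL)
  (Hratio : bH / gH > bL / gL) (Hbeta : bH > bL)
  (HqHL : 0 <= qHL) (HqLH : 0 <= qLH)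
  (Hal : 0 < al < 1) (HrhoH : 0 < rhoH) (HrhoL : 0 < rhoL) (HCP : 0 < CP)
  (Hcond : Rmax (qLH + gL) (qHL + gH)
           <= Rmin (beta_hat al bH 1) (beta_hat al bL 1))
  (IHs ILs : R -> R)
  (Hend : forall z, 0 <= z <= 1 ->
     is_endemic_eq bH bL gH gL qHL qLH al z (IHs z) (ILs z)) :
  let Cmin := (1 - al) * (bH * rhoH * IHs 1 + bL * rhoL * ILs 1) in
  let Cmax := (1 - al) * (bH * rhoH * IHs 0 + bL * rhoL * ILs 0) in
  let NE := is_stationary_NE bH bL gH gL qHL qLH al rhoH rhoL CP in
  (* (a) *)
  (CP < Cmin -> forall IH IL z, NE IH IL z -> z = 1) /\
  (* (b) *)
  (CP > Cmax -> forall IH IL z, NE IH IL z -> z = 0) /\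
  (* (c) *)
  (Cmin <= CP <= Cmax ->
     exists z0, (0 <= z0 <= 1 /\
                 DeltaR bH bL al rhoH rhoL CP (IHs z0) (ILs z0) = 0) /\
       (forall z, 0 <= z <= 1 ->
          DeltaR bH bL al rhoH rhoL CP (IHs z) (ILs z) = 0 -> z = z0) /\
       (forall IH IL z, NE IH IL z -> z = z0)) /\
  (* Moreover: uniqueness of the endemic equilibrium, and the infected
     proportions at any stationary NE are at it. *)
  (forall z, 0 <= z <= 1 -> forall IH IL,
     is_endemic_eq bH bL gH gL qHL qLH al z IH IL -> IH = IHs z /\ IL = ILs z) /\
  (forall IH IL z, NE IH IL z -> IH = IHs z /\ IL = ILs z).
Proof.
  cbv zeta. split; [| split; [| split; [| split]]].
  - eapply (ne_full_protection bH bL gH gL qHL qLH al rhoH rhoL CP); eassumption.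
  - eapply (ne_no_protection bH bL gH gL qHL qLH al rhoH rhoL CP); eassumption.
  - eapply (ne_interior_level bH bL gH gL qHL qLH al rhoH rhoL CP); eassumption.
  - intros z Hz IH IL. eapply (endemic_unique bH bL gH gL qHL qLH al); eassumption.
  - eapply (ne_state bH bL gH gL qHL qLH al rhoH rhoL CP); eassumption.
Qed.
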